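(* If $\mathcal{F}$ is a uniformly Lipschitz collection of maps between metric spaces (i.e. $\sup_{F\in\mathcal{F}}\mathrm{Lip}(F)<\infty$), then $\lim_n a_n(\mathcal{F})$ exists and equals $\inf_n a_n(\mathcal{F})$.
   Context: Convention $\frac00=0$. $\mathrm{Lip}(g)=\sup_{x,y}d_V(g(x),g(y))/d_U(x,y)$. $2^n=\{\pm1\}^n$ carries the normalized Hamming metric $\partial(\varepsilon,\delta)=\frac1n|\{i:\varepsilon(i)\ne\delta(i)\}|$ and the uniform probability measure (expectation $\mathbb{E}$). $a_n(\mathcal{F})$ is the infimum of those $a>0$ such that for every $F:X\to Y$ in $\mathcal{F}$ and every $f:2^n\to X$, $\mathbb{E}\,d_Y(F\circ f(\varepsilon),F\circ f(-\varepsilon))\le a\,\mathrm{Lip}(f:2^n\to X)$. *)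

From HB Require Import structures.
From mathcomp Require Import all_boot all_order all_algebra.
From mathcomp Require Import all_classical all_reals all_analysis.
Set Implicit Arguments. Unset Strict Implicit. Unset Printing Implicit Defensive.
Import Order.TTheory GRing.Theory Num.Theory.
Local Open Scope classical_set_scope.
Local Open Scope ring_scope.

Record metric_space (R : realType) := MetricSpace {
  mcarrier :> Type;
  msp_dist : mcarrier -> mcarrier -> R;
  msp_dist_eq0 : forall x y, msp_dist x y = 0 <-> x = y;
  msp_dist_sym : forall x y, msp_dist x y = msp_dist y x;
  msp_dist_triangle : forall x y z, msp_dist x z <= msp_dist x y + msp_dist y z
}.

(* Lipschitz constant sup_{x,y} dV(g x, g y)/dU(x,y), in the extended reals,
   with the convention 0/0 = 0 (which is MathComp's x / 0 = 0). *)

Definition LipE (R : realType) (U V : Type) (dU : U -> U -> R) (dV : V -> V -> R)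
  (g : U -> V) : \bar R :=
  ereal_sup [set ((dV (g p.1) (g p.2)) / dU p.1 p.2)%:E | p in [set: U * U]].

(* The discrete cube 2^n = {+-1}^n, encoded as boolean vectors; -eps is
   pointwise negation. *)
Definition cube (n : nat) := {ffun 'I_n -> bool}.
Definition cneg (n : nat) (e : cube n) : cube n := [ffun i => ~~ e i].

Definition hamming (R : realType) (n : nat) (e d : cube n) : R :=
  #|[set i | e i != d i]|%:R / n%:R.

Definition cubeE (R : realType) (n : nat) (h : cube n -> R) : R :=
  (\sum_(e : cube n) h e) / (2 ^ n)%:R.

Definition a_n (R : realType) (I : Type) (X Y : I -> metric_space R)
  (F : forall i, X i -> Y i) (n : nat) : \bar R :=
  ereal_inf [set a%:E | a in [set a : R | 0 < a /\
     forall (i : I) (f : cube n -> X i),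
       ((cubeE (fun e => msp_dist (F i (f e)) (F i (f (cneg e)))))%:E
         <= a%:E * LipE (@hamming R n) (@msp_dist R (X i)) f)%E]].

From HB Require Import structures.
From mathcomp Require Import all_boot all_order all_algebra.
From mathcomp Require Import all_classical all_reals all_analysis.
From mathcomp Require Import ring.
Import Order.TTheory GRing.Theory Num.Theory.

(* Fix a base point e of the m-cube and colour the coordinates j < m by their
   residue j mod (n+1).  Flipping exactly the coordinates whose colour k has
   d_k = -1, for d in the (n+1)-cube, embeds the (n+1)-cube into the m-cube; the
   embedding commutes with the antipodal map and stretches the normalised
   Hamming distance by at most 1 + (n+1)/m, since each colour class has at most
   m/(n+1) + 1 elements.  Averaging over e, whose translates cover the m-cube
   uniformly, turns every constant valid for n+1 into one valid for m, so
   a_m <= (1 + (n+1)/m) a_(n+1).  Letting m go to infinity, the limsup of a_m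
   is at most every a_n with n > 0, hence a_m converges to their infimum. *)

Local Open Scope ring_scope.

Section CubeEmbedding.
Variables n m : nat.

Definition cube_block (j : 'I_m) : 'I_n.+1 := Ordinal (ltn_pmod j (ltn0Sn n)).

Definition cube_embed (e : cube m) (d : cube n.+1) : cube m :=
  [ffun j => e j (+) d (cube_block j)].

Lemma cneg_embed e d : cneg (cube_embed e d) = cube_embed e (cneg d).
Proof. by apply/ffunP => j; rewrite !ffunE addbN. Qed.

Lemma cube_embed_inj d : injective (cube_embed^~ d).
Proof.
move=> e e' /ffunP eq_ee'; apply/ffunP => j.
by move: (eq_ee' j); rewrite !ffunE; apply: addIb.
Qed.

Lemma card_cube_block_fibre k :
  (#|[set j | cube_block j == k]| <= (m %/ n.+1).+1)%N.
Proof.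
have le_div (j : 'I_m) : (j %/ n.+1 <= m %/ n.+1)%N by apply/leq_div2r/ltnW.
pose q (j : 'I_m) : 'I_(m %/ n.+1).+1 := inord (j %/ n.+1).
have q_inj : {in [set j | cube_block j == k] &, injective q}.
  move=> j j'; rewrite !inE => /eqP/(congr1 val) /= jk /eqP/(congr1 val) /= j'k.
  move/(congr1 val); rewrite /= !inordK ?ltnS // => qjj'.
  by apply: val_inj; rewrite /= (divn_eq j n.+1) (divn_eq j' n.+1) qjj' jk j'k.
by rewrite -(card_in_imset q_inj); apply: leq_trans (max_card _) _; rewrite card_ord.
Qed.

Lemma card_embed_diff e d d' :
  (#|[set j | cube_embed e d j != cube_embed e d' j]|
     <= (m %/ n.+1).+1 * #|[set k | d k != d' k]|)%N.
Proof.
set D := [set k | d k != d' k].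
have -> : [set j | cube_embed e d j != cube_embed e d' j] = [set j | cube_block j \in D].
  by apply/setP => j; rewrite !inE !ffunE (can_eq (addKb _)).
rewrite -sum1_card (partition_big cube_block (mem D)) => [|j]; last by rewrite inE.
rewrite mulnC -sum_nat_const leq_sum // => k _.
apply: leq_trans (card_cube_block_fibre k); rewrite -sum1_card big_mkcond /=.
rewrite [X in (_ <= X)%N]big_mkcond leq_sum // => j _.
by rewrite !inE; case: (cube_block j == k); rewrite ?andbT ?andbF //; case: ifP.
Qed.

End CubeEmbedding.

Arguments cube_block n {m}.
Arguments cube_embed {n m}.
Arguments cube_embed_inj {n m}.

Section Hamming.
Variable R : realType.

Lemma hammingE n (e d : cube n) :
  @hamming R n e d = #|[set i | e i != d i]|%:R / n%:R.
Proof.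
rewrite /hamming; congr (_%:R / _); apply: eq_card => i.
by rewrite inE /=; apply/idP/idP; rewrite in_setE.
Qed.

Lemma hamming_ge0 n (e d : cube n) : 0 <= @hamming R n e d.
Proof. by rewrite hammingE divr_ge0. Qed.

Lemma hamming_eq0 n (e d : cube n) : @hamming R n e d = 0 <-> e = d.
Proof.
rewrite hammingE; split => [|->]; last first.
  by rewrite (eq_card0 (fun i => _)) ?mul0r // => i; rewrite inE eqxx.
move/eqP; rewrite mulf_eq0 invr_eq0 !pnatr_eq0 cards_eq0 => /orP[/eqP D0|/eqP n0].
  apply/ffunP => i; apply/eqP; apply: contraT => ne_i.
  have : i \in [set i | e i != d i] by rewrite inE.
  by rewrite D0 inE.
by move: e d; rewrite n0 => e d; apply/ffunP => -[].
Qed.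

Lemma hamming_embed_le n m (e : cube m) (d d' : cube n.+1) : (0 < m)%N ->
  @hamming R m (cube_embed e d) (cube_embed e d')
    <= (1 + n.+1%:R / m%:R) * @hamming R n.+1 d d'.
Proof.
move=> m_gt0; rewrite !hammingE.
set D := #|[set k | d k != d' k]|; set q := (m %/ n.+1)%N.
have m_pos : 0 < m%:R :> R by rewrite ltr0n.
have N_pos : 0 < n.+1%:R :> R by rewrite ltr0n.
have -> : (1 + n.+1%:R / m%:R) * (D%:R / n.+1%:R)
          = (D%:R * (m%:R / n.+1%:R) + D%:R) / m%:R :> R.
  by field; rewrite !gt_eqF.
rewrite ler_pM2r ?invr_gt0 //; apply: le_trans (_ : ((q.+1 * D)%:R <= _)).
  by rewrite ler_nat card_embed_diff.
have q_le : q%:R <= m%:R / n.+1%:R :> R.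
  by rewrite ler_pdivlMr // -natrM ler_nat leq_divM.
by rewrite natrM mulrSr mulrDl mul1r mulrC lerD2r ler_wpM2l.
Qed.

End Hamming.

Section Lipschitz.
Variables (R : realType) (U V : Type) (dU : U -> U -> R) (dV : V -> V -> R).

Lemma LipE_ubound (g : U -> V) x y : ((dV (g x) (g y) / dU x y)%:E <= LipE dU dV g)%E.
Proof. by apply: ereal_sup_ubound; exists (x, y). Qed.

Hypothesis dU_eq0 : forall x y, dU x y = 0 <-> x = y.

Lemma LipE_ge0 (g : U -> V) (x : U) : (0 <= LipE dU dV g)%E.
Proof. by apply: le_trans (LipE_ubound g x x); rewrite (dU_eq0 x x).2 // invr0 mulr0. Qed.

Hypotheses (dU_ge0 : forall x y, 0 <= dU x y) (dV_xx : forall v, dV v v = 0).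

Lemma LipE_le_fin (g : U -> V) (l : R) : 0 <= l ->
  (LipE dU dV g <= l%:E)%E <-> forall x y, dV (g x) (g y) <= l * dU x y.
Proof.
move=> l_ge0; split => [Lip_le x y|dist_le]; last first.
  apply: ge_ereal_sup => _ [[x y] _ <-]; rewrite lee_fin /=.
  have [->|dxy_neq0] := eqVneq (dU x y) 0; first by rewrite invr0 mulr0.
  by rewrite ler_pdivrMr // lt0r dxy_neq0 dU_ge0.
have [/dU_eq0 <-|dxy_neq0] := eqVneq (dU x y) 0.
  by rewrite dV_xx (dU_eq0 x x).2 // mulr0.
rewrite -ler_pdivrMr ?lt0r ?dxy_neq0 ?dU_ge0 // -lee_fin.
exact: le_trans (LipE_ubound g x y) Lip_le.
Qed.

End Lipschitz.

Arguments LipE_ge0 {R U V dU} dV.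
Arguments LipE_le_fin {R U V dU dV}.

Lemma msp_dist_xx (R : realType) (X : metric_space R) (x : X) : msp_dist x x = 0.
Proof. exact/(msp_dist_eq0 x x).2. Qed.

Section CubeExpectation.
Variable R : realType.

Lemma card_cube n : #|{: cube n}| = (2 ^ n)%N.
Proof. by rewrite card_ffun card_bool card_ord. Qed.

Lemma cubeE_le_const n (h : cube n -> R) c : (forall e, h e <= c) -> cubeE h <= c.
Proof.
move=> h_le; rewrite /cubeE ler_pdivrMr ?ltr0n ?expn_gt0 //.
by rewrite -(card_cube n) mulr_natr -sumr_const ler_sum.
Qed.

Lemma cubeE_embed n m (h : cube m -> R) :
  cubeE h = cubeE (fun e => cubeE (fun d : cube n.+1 => h (cube_embed e d))).
Proof.
rewrite /cubeE -mulr_suml exchange_big /=.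
rewrite [in RHS](eq_bigr (fun=> \sum_e h e)) => [|d _]; last first.
  by rewrite [RHS](reindex_inj (cube_embed_inj d)).
by rewrite sumr_const card_cube -[_ *+ (2 ^ n.+1)]mulr_natr mulfK.
Qed.

End CubeExpectation.

Arguments cubeE_embed {R} n {m}.

Section AntipodalBound.
Variables (R : realType) (X Y : metric_space R) (F : X -> Y).

Definition antipodal_bound n (a : R) : Prop :=
  forall f : cube n -> X,
    ((cubeE (fun e => msp_dist (F (f e)) (F (f (cneg e)))))%:E
      <= a%:E * LipE (@hamming R n) (@msp_dist R X) f)%E.

Lemma antipodal_bound_embed n m a : (0 < m)%N -> 0 < a ->
  antipodal_bound n.+1 a -> antipodal_bound m (a * (1 + n.+1%:R / m%:R)).
Proof.
move=> m_gt0 a_gt0 bound_a f; set c := 1 + _.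
have c_gt0 : 0 < c by rewrite addr_gt0 ?divr_gt0 ?ltr0n.
have := LipE_ge0 (@msp_dist R X) (@hamming_eq0 R m) f [ffun=> false].
case Lip_f : (LipE _ _ f) => [l||] // l_ge0; last first.
  by rewrite gt0_muley ?leey // lte_fin mulr_gt0.
rewrite lee_fin in l_ge0.
have lip_f x y : msp_dist (f x) (f y) <= l * @hamming R m x y.
  move: x y; apply/(LipE_le_fin (@hamming_eq0 R m) (@hamming_ge0 R m)
                                (@msp_dist_xx R X)) => //.
  by rewrite Lip_f.
rewrite (cubeE_embed n) -EFinM lee_fin (mulrAC a) -mulrA; apply: cubeE_le_const => e.
have lip_fe :
    (LipE (@hamming R n.+1) (@msp_dist R X) (f \o cube_embed e) <= (l * c)%:E)%E.
  apply/(LipE_le_fin (@hamming_eq0 R n.+1) (@hamming_ge0 R n.+1) (@msp_dist_xx R X)).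
    exact: mulr_ge0 l_ge0 (ltW c_gt0).
  move=> d d' /=; apply: le_trans (lip_f _ _) _.
  by rewrite -mulrA ler_wpM2l // hamming_embed_le.
rewrite /cubeE; under eq_bigr do rewrite cneg_embed.
rewrite -lee_fin; apply: le_trans (bound_a (f \o cube_embed e)) _.
by rewrite EFinM lee_wpmul2l // lee_fin ltW.
Qed.

End AntipodalBound.

Section AntipodalConstant.
Variables (R : realType) (I : Type) (X Y : I -> metric_space R).
Variable F : forall i, X i -> Y i.

Lemma a_n_ge0 n : (0 <= @a_n R I X Y F n)%E.
Proof. by apply: le_ereal_inf_tmp => _ [b [b_gt0 _] <-]; rewrite lee_fin ltW. Qed.

Lemma a_n_le_embed n m : (0 < m)%N ->
  (@a_n R I X Y F m <= (1 + n.+1%:R / m%:R)%:E * @a_n R I X Y F n.+1)%E.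
Proof.
move=> m_gt0; set c := 1 + _.
have c_gt0 : 0 < c by rewrite addr_gt0 ?divr_gt0 ?ltr0n.
rewrite -ereal_inf_pZl //; apply: le_ereal_inf_tmp => _ [_ [b [b_gt0 bound_b] <-] <-].
rewrite -EFinM; apply: ereal_inf_lbound; exists (c * b) => //.
split => [|i]; first exact: mulr_gt0.
by rewrite mulrC; apply: antipodal_bound_embed => //; apply: bound_b.
Qed.

End AntipodalConstant.

Section RatioBound.
Variable R : realType.
Local Open Scope classical_set_scope.
Local Open Scope ereal_scope.

Lemma limn_esup_le_ratio (u : (\bar R)^nat) (k : nat) (x : \bar R) : 0 <= x ->
  (forall m, u m <= (1 + k%:R / m.+1%:R)%:E * x) -> limn_esup u <= x.
Proof.
case: x => [r| |] // r_ge0 u_le; last by rewrite leey.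
rewrite lee_fin in r_ge0; apply/lee_addgt0Pr => eps eps_gt0.
pose N := Num.Def.archi_bound (k%:R * r / eps).
have kr_lt : (k%:R * r < N%:R * eps)%R.
  rewrite -ltr_pdivrMr //; apply: archi_boundP.
  exact: divr_ge0 (mulr_ge0 (ler0n _ _) r_ge0) (ltW eps_gt0).
apply: (@le_trans _ _ (ereal_sup (u @` [set m | (N <= m)%N]))).
  by apply: ereal_inf_lbound; exists [set m | (N <= m)%N] => //; exists N.
apply: ge_ereal_sup => _ [m /= N_le_m <-]; apply: le_trans (u_le m) _.
rewrite -EFinM lee_fin mulrDl mul1r lerD2l mulrAC ler_pdivrMr ?ltr0n //.
apply: le_trans (ltW kr_lt) _; rewrite mulrC ler_pM2l // ler_nat.
exact: leq_trans N_le_m (leqnSn m).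
Qed.

Lemma cvg_ereal_inf_of_ratio_le (u : (\bar R)^nat) : (forall n, 0 <= u n) ->
  (forall n m, (0 < n)%N -> (0 < m)%N -> u m <= (1 + n%:R / m%:R)%:E * u n) ->
  u @ \oo --> ereal_inf [set u n | n in [set n | (0 < n)%N]].
Proof.
move=> u_ge0 u_le.
(* [u 0] is excluded from the infimum, so only the shifted sequence stays above it. *)
rewrite -cvg_shiftS; apply: limn_esup_le_cvg => [|m]; last first.
  by apply: ereal_inf_lbound; exists m.+1.
apply: le_ereal_inf_tmp => _ [n n_gt0 <-].
by apply: (limn_esup_le_ratio _ n) => // m; apply: u_le.
Qed.

End RatioBound.

Local Open Scope classical_set_scope.

Theorem proposition5p2 (R : realType) (I : Type) (X Y : I -> metric_space R)
  (F : forall i, X i -> Y i) :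
  (exists L : R, forall i, LipE (@msp_dist R (X i)) (@msp_dist R (Y i)) (F i) <= L%:E)%E ->
  (@a_n R I X Y F n @[n --> \oo] --> ereal_inf [set @a_n R I X Y F n | n in [set n | (0 < n)%N]])%E.
Proof.
move=> _; apply: cvg_ereal_inf_of_ratio_le => [n|[|n] m // _ m_gt0].
  exact: a_n_ge0.
exact: a_n_le_embed.
Qed.
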